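(* Let $s\ge 1$, $r\ge 1$, let $n_1,\ldots,n_r\ge 1$ be integers, and let $\sigma_1,\ldots,\sigma_r$ be semi-characters each of which is a finite product (possibly empty, giving the trivial semi-character $\boldsymbol{1}$) of the maps $\chi_{t_1},\ldots,\chi_{t_s}$. Then the multiple zeta value $$\zeta_C\begin{pmatrix}\sigma_1&\cdots&\sigma_r\\ n_1&\cdots&n_r\end{pmatrix}$$ belongs to the Tate algebra $\mathbb{T}_s$, and the function it defines on $\{(z_1,\ldots,z_s)\in\mathbb{C}_\infty^s:|z_i|\le 1\}$ extends to an entire function $\mathbb{C}_\infty^s\to\mathbb{C}_\infty$ (i.e. it is given by a power series in $t_1,\ldots,t_s$ with coefficients in $\mathbb{C}_\infty$ converging on all of $\mathbb{C}_\infty^s$).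
   Context: $q$ is a power of a prime $p$, $A=\mathbb{F}_q[\theta]$, $K=\mathbb{F}_q(\theta)$, $K_\infty=\mathbb{F}_q((1/\theta))$, $\mathbb{C}_\infty$ the completion of an algebraic closure of $K_\infty$ with absolute value $|\cdot|$ normalized by $|\theta|=q$. $A^+$ is the set of monic polynomials of $A$ and $A^+(d)$ those of degree $d$. $t_1,\ldots,t_s$ are indeterminates; for $a\in A$, $a(t_i)$ denotes the polynomial obtained by replacing $\theta$ by $t_i$, and $\chi_{t_i}:A^+\to\mathbb{F}_q[t_1,\ldots,t_s]$, $a\mapsto a(t_i)$. A semi-character is a multiplicative monoid map from $A^+$; products of semi-characters are taken pointwise. $\mathbb{T}_s$ is the Tate algebra: formal power series in $t_1,\ldots,t_s$ with coefficients in $\mathbb{C}_\infty$ tending to $0$, with the Gauss norm. For a semi-character $\sigma$ and integers $n,d\ge0$, $S_d(n;\sigma)=\sum_{a\in A^+(d)}a^{-n}\sigma(a)$, and $$S_d\begin{pmatrix}\sigma_1&\cdots&\sigma_r\\ n_1&\cdots&n_r\end{pmatrix}=S_d(n_1;\sigma_1)\sum_{d>i_2>\cdots>i_r\ge0}S_{i_2}(n_2;\sigma_2)\cdots S_{i_r}(n_r;\sigma_r),$$ $$\zeta_C\begin{pmatrix}\sigma_1&\cdots&\sigma_r\\ n_1&\cdots&n_r\end{pmatrix}=\sum_{d\ge0}S_d\begin{pmatrix}\sigma_1&\cdots&\sigma_r\\ n_1&\cdots&n_r\end{pmatrix}.$$ *)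

From HB Require Import structures.
From mathcomp Require Import all_boot all_order all_algebra all_field.
Set Implicit Arguments. Unset Strict Implicit. Unset Printing Implicit Defensive.
Import GRing.Theory.
Local Open Scope ring_scope.

(* Encoding:
   F_q = a finite field F, A = {poly F} (variable theta).
   u := 1/theta.  All quantities a^{-n} sigma(a) (a monic) live in
   F[[u]][[t_1..t_s]] subset K_infty[[t_1..t_s]];  a series is
   represented by its coefficient function  m k |-> [t^m u^k].
   The absolute value is |c| = q^{-(u-adic valuation of c)}. *)

Section MZV.
Variable F : finFieldType.
Variable s : nat.

Definition mindex := 'I_s -> nat.
Definition ser := mindex -> nat -> F.

Definition mdeg (m : mindex) : nat := (\sum_(i < s) m i)%N.

Definition ser_one : ser := fun m k => if (mdeg m == 0%N) && (k == 0%N) then 1 else 0.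

Definition ser_mul (f g : ser) : ser := fun m k =>
  \sum_(j : {ffun 'I_s -> 'I_(\max_(i < s) m i).+1} | [forall i, (j i <= m i)%N])
    \sum_(l < k.+1) f (fun i => nat_of_ord (j i)) l * g (fun i => (m i - j i)%N) (k - l)%N.

Definition ser_sum (d : nat) (f : nat -> ser) : ser := fun m k => \sum_(i < d) f i m k.

Fixpoint inv_upto (c : nat -> F) (k : nat) : seq F :=
  match k with
  | 0 => [:: (c 0%N)^-1]
  | k'.+1 => let l := inv_upto c k' in
      rcons l (- (c 0%N)^-1 * \sum_(i < k'.+1) c i.+1 * nth 0 l (k' - i)%N)
  end.
Definition psinv (c : nat -> F) (k : nat) : F := nth 0 (inv_upto c k) k.

(* the monic polynomial theta^d + sum_{i<d} c_i theta^i; c ranges over a set in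
   bijection with A^+(d) *)
Definition monic_of (d : nat) (c : {ffun 'I_d -> F}) : {poly F} :=
  'X^d + \poly_(i < d) (if @insub _ (fun x => (x < d)%N) 'I_d i is Some j then c j else 0).

(* [u^k] of a^{-n} in K_infty, for a monic of degree d:
   a^{-n} = u^{nd} / rev(a^n)(u), rev(p)(u) = u^{deg p} p(1/u). *)
Definition inv_pow (d : nat) (a : {poly F}) (n k : nat) : F :=
  let D := (n * d)%N in
  if (D <= k)%N then
    psinv (fun i => if (i <= D)%N then (a ^+ n)`_(D - i) else 0) (k - D)%N
  else 0.

(* sigma = prod_i chi_{t_i}^{e_i}; sigma(a) = prod_i a(t_i)^{e_i}.
   S_d(n; sigma) = sum_{a in A^+(d)} a^{-n} sigma(a). *)
Definition Sd (d : nat) (p : nat * mindex) : ser := fun m k =>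
  \sum_(c : {ffun 'I_d -> F})
     (\prod_(i < s) ((monic_of c) ^+ (p.2 i))`_(m i)) * inv_pow d (monic_of c) p.1 k.

(* S_d ( sigma_1 ... sigma_r ; n_1 ... n_r ), the data being the nonempty list
   (n_1,sigma_1) :: [(n_2,sigma_2); ...; (n_r,sigma_r)] *)
Fixpoint Sm (p : nat * mindex) (ps : seq (nat * mindex)) (d : nat) : ser :=
  match ps with
  | [::] => Sd d p
  | p' :: ps' => ser_mul (Sd d p) (ser_sum d (fun i => Sm p' ps' i))
  end.

(* z is the Gauss-norm limit of the partial sums sum_{d<D} S_d(...) *)
Definition is_zeta (p : nat * mindex) (ps : seq (nat * mindex)) (z : ser) : Prop :=
  forall B : nat, exists D0 : nat, forall D : nat, (D0 <= D)%N ->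
    forall (m : mindex) (k : nat), (k < B)%N -> z m k = ser_sum D (Sm p ps) m k.

(* membership in T_s: coefficients tend to 0 *)
Definition in_Tate (z : ser) : Prop :=
  forall B : nat, exists M : nat, forall m : mindex, (M <= mdeg m)%N ->
    forall k : nat, (k < B)%N -> z m k = 0.

(* entire: |c_m| q^{N |m|} -> 0 for every N, i.e. the series converges on all
   of C_infty^s *)
Definition entire (z : ser) : Prop :=
  forall N B : nat, exists M : nat, forall m : mindex, (M <= mdeg m)%N ->
    forall k : nat, (k < N * mdeg m + B)%N -> z m k = 0.

End MZV.

From HB Require Import structures.
From mathcomp Require Import all_boot all_order all_algebra all_field.
From mathcomp Require Import zify.
Set Implicit Arguments. Unset Strict Implicit. Unset Printing Implicit Defensive.
Import GRing.Theory.
Local Open Scope ring_scope.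

(* Write a monic a of degree d as theta^d + c_(d-1) theta^(d-1) + ... + c_0 with c in F^d.
   The t-coefficients of sigma(a) are polynomials in c of degree at most the total exponent
   w of sigma.  In u = 1/theta one has a^-n = u^(nd) rev(a)^-n, and since
   rev(a)^(q^L) = 1 mod u^(q^L), the coefficients of u^k for k < nd + q^L are those of
   rev(a)^(q^L - n), polynomials in c of degree at most (q-1)L (write q^L - n in base q).
   A polynomial of degree < d(q-1) sums to 0 over F^d, so [u^k] S_d vanishes unless
   k >= 2^(d - w - 1), whereas the t-degree of S_d is at most d w.  Hence the coefficient
   of t^m u^k of the zeta value vanishes unless k grows exponentially in |m|, which is
   much stronger than entireness. *)

Section PolynomialFunctions.
Variables (R : comNzRingType) (d : nat).
Local Notation V := {ffun 'I_d -> R}.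
Local Notation exps := {ffun 'I_d -> nat}.

Definition monomial (al : exps) (c : V) : R := \prod_i c i ^+ al i.

Definition polyfun (D : nat) (f : V -> R) : Prop :=
  exists l : seq (R * exps),
    all (fun x : R * exps => \sum_i x.2 i <= D)%N l /\
    forall c, f c = \sum_(x <- l) x.1 * monomial x.2 c.

Lemma polyfun_ext D f g : f =1 g -> polyfun D f -> polyfun D g.
Proof. by move=> fg [l [hl fE]]; exists l; split=> // c; rewrite -fg. Qed.

Lemma polyfunW D D' f : (D <= D')%N -> polyfun D f -> polyfun D' f.
Proof.
move=> leDD' [l [hl fE]]; exists l; split=> //.
by apply/allP=> x /(allP hl) /= hx; apply: leq_trans hx leDD'.
Qed.

Lemma polyfun_monomial D a (al : exps) :
  (\sum_i al i <= D)%N -> polyfun D (fun c => a * monomial al c).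
Proof. by move=> hal; exists [:: (a, al)]; split; rewrite /= ?hal // => c; rewrite big_seq1. Qed.

Lemma polyfun0 D : polyfun D (fun _ => 0).
Proof. by exists [::]; split=> // c; rewrite big_nil. Qed.

Lemma polyfunD D f g : polyfun D f -> polyfun D g -> polyfun D (fun c => f c + g c).
Proof.
move=> [l1 [h1 e1]] [l2 [h2 e2]]; exists (l1 ++ l2).
by split=> [|c]; rewrite ?all_cat ?h1 ?h2 // big_cat e1 e2.
Qed.

Lemma polyfun_sum_seq D (T : eqType) (r : seq T) (G : T -> V -> R) :
  (forall x, x \in r -> polyfun D (G x)) -> polyfun D (fun c => \sum_(x <- r) G x c).
Proof.
elim: r => [|x r IHr] hG; first by apply: polyfun_ext (polyfun0 D) => c; rewrite big_nil.
have hr y : y \in r -> polyfun D (G y) by move=> yr; apply: hG; rewrite inE yr orbT.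
by apply: polyfun_ext (polyfunD (hG x (mem_head _ _)) (IHr hr)) => c; rewrite big_cons.
Qed.

Lemma polyfun_sum D (I : finType) (G : I -> V -> R) :
  (forall i, polyfun D (G i)) -> polyfun D (fun c => \sum_i G i c).
Proof.
move=> hG; apply: polyfun_ext (polyfun_sum_seq (r := enum I) (fun i _ => hG i)) => c.
by rewrite big_enum.
Qed.

Lemma monomialD (al be : exps) c :
  monomial [ffun i => (al i + be i)%N] c = monomial al c * monomial be c.
Proof. by rewrite /monomial -big_split; apply: eq_bigr => i _; rewrite ffunE exprD. Qed.

Lemma polyfunM D1 D2 f g :
  polyfun D1 f -> polyfun D2 g -> polyfun (D1 + D2) (fun c => f c * g c).
Proof.
move=> [l1 [h1 e1]] [l2 [h2 e2]].
have hterm x : x \in l1 -> polyfun (D1 + D2)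
    (fun c => \sum_(y <- l2) (x.1 * y.1) * monomial [ffun i => (x.2 i + y.2 i)%N] c).
  move=> xl1; apply: polyfun_sum_seq => y yl2; apply: polyfun_monomial.
  under eq_bigr do rewrite ffunE.
  by rewrite big_split leq_add ?(allP h1 x xl1) ?(allP h2 y yl2).
apply: polyfun_ext (polyfun_sum_seq hterm) => c.
rewrite e1 e2 mulr_suml; apply: eq_bigr => x _.
by rewrite mulr_sumr; apply: eq_bigr => y _; rewrite monomialD mulrACA.
Qed.

Lemma polyfun_cst D a : polyfun D (fun _ => a).
Proof.
have h0 : (\sum_i ([ffun=> 0%N] : exps) i <= D)%N by rewrite big1 // => i _; rewrite ffunE.
apply: polyfun_ext (polyfun_monomial a h0) => c.
by rewrite /monomial big1 ?mulr1 // => i _; rewrite ffunE expr0.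
Qed.

Lemma polyfun_coord D i : (1 <= D)%N -> polyfun D (fun c => c i).
Proof.
pose al : exps := [ffun j => nat_of_bool (j == i)].
have alE j : j != i -> al j = 0%N by move=> /negbTE ji; rewrite ffunE ji.
move=> hD; have hal : (\sum_j al j <= D)%N.
  by rewrite (bigD1 i) //= big1 ?ffunE ?eqxx // => j /alE.
apply: polyfun_ext (polyfun_monomial 1 hal) => c.
rewrite mul1r /monomial (bigD1 i) //= big1 ?ffunE ?eqxx ?mulr1 //.
by move=> j /alE ->; rewrite expr0.
Qed.

Lemma polyfun_prod (T : eqType) (r : seq T) (e : T -> nat) (G : T -> V -> R) :
  (forall x, polyfun (e x) (G x)) ->
  polyfun (\sum_(x <- r) e x) (fun c => \prod_(x <- r) G x c).
Proof.
move=> hG; elim: r => [|x r IHr].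
  by apply: polyfun_ext (polyfun_cst _ 1) => c; rewrite big_nil.
by apply: polyfun_ext (polyfunW _ (polyfunM (hG x) IHr)) => [c|]; rewrite !big_cons.
Qed.

End PolynomialFunctions.

Section FiniteFieldSums.
Variable F : finFieldType.
Local Notation q := #|F|.

Lemma card_finField_pexp : exists2 p, p \in [pchar F] & exists n, q = (p ^ n.+1)%N.
Proof.
have [p _ ch] := finPcharP F; exists p => //.
case: (logn p q) (card_pprimeChar ch) => [|n] qE; last by exists n.
by have := finNzRing_gt1 F; rewrite qE.
Qed.

Lemma natr_card : q%:R = 0 :> F.
Proof. by have [p ch [n ->]] := card_finField_pexp; rewrite natrX (pcharf0 ch) expr0n. Qed.

Lemma pchar_pnat_card : ([pchar {poly F}]).-nat q.
Proof.
have [p ch [n ->]] := card_finField_pexp.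
rewrite pnatX (eq_pnat _ (fun x => etrans (pchar_poly F x) (pcharf_eq ch x))).
by rewrite pnat_id ?(pcharf_prime ch).
Qed.

Lemma sum_expr_eq0 a : (a < q.-1)%N -> \sum_(y : F) y ^+ a = 0.
Proof.
move=> ltaq; have [->|a_gt0] := posnP a.
  by under eq_bigr do rewrite expr0; rewrite sumr_const natr_card.
have [g g0 ga] : exists2 g : F, g != 0 & g ^+ a != 1.
  apply/exists_inP; apply: contraLR ltaq; rewrite negb_exists_in -leqNgt => /forall_inP ga1.
  have := @max_unity_roots F a (enum (predC1 0)) a_gt0.
  rewrite -cardE cardC1; apply; last exact: enum_uniq.
  by apply/allP => y; rewrite mem_enum unity_rootE => /ga1 /negPn.
have sumE : \sum_(y : F) y ^+ a = g ^+ a * \sum_(y : F) y ^+ a.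
  rewrite [LHS](reindex_inj (mulfI g0)) mulr_sumr.
  by apply: eq_bigr => y _; rewrite exprMn.
apply/eqP; move/eqP: sumE; rewrite -subr_eq0 -{1}[\sum_y _]mul1r -mulrBl mulf_eq0.
by rewrite subr_eq0 eq_sym (negbTE ga).
Qed.

(* Every monomial of degree < d(q-1) has an exponent a < q - 1 in some variable, and
   sum_y y^a = 0. *)
Lemma sum_polyfun_eq0 d D (f : {ffun 'I_d -> F} -> F) :
  polyfun D f -> (D < d * q.-1)%N -> \sum_c f c = 0.
Proof.
move=> [l [hl fE]] ltD; under eq_bigr do rewrite fE.
rewrite exchange_big /= big1_seq // => x /andP [_ xl].
rewrite -mulr_sumr /monomial -(bigA_distr_bigA (fun i (y : F) => y ^+ x.2 i)) /=.
have [i hi] : exists i, (x.2 i < q.-1)%N.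
  apply/existsP; apply: contraLR ltD; rewrite negb_exists -leqNgt => /forallP hx.
  apply: leq_trans (allP hl x xl); rewrite -[X in (X * _)%N]card_ord -sum_nat_const.
  by apply: leq_sum => i _; rewrite leqNgt hx.
by rewrite (bigD1 i) //= sum_expr_eq0 // mul0r mulr0.
Qed.

End FiniteFieldSums.

Section Reversal.
Variable R : comNzRingType.

Definition revp (N : nat) (p : {poly R}) : {poly R} := \poly_(i < N.+1) p`_(N - i).

Lemma coef_revp N p i : (revp N p)`_i = if (i <= N)%N then p`_(N - i) else 0.
Proof. by rewrite coef_poly ltnS. Qed.

Lemma revpD N : {morph revp N : p r / p + r}.
Proof.
by move=> p r; apply/polyP => i; rewrite coefD !coef_revp coefD; case: ifP; rewrite ?addr0.
Qed.

Lemma revpZ N a p : revp N (a *: p) = a *: revp N p.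
Proof. by apply/polyP => i; rewrite coefZ !coef_revp coefZ; case: ifP; rewrite ?mulr0. Qed.

Lemma revp_sum N (I : finType) (G : I -> {poly R}) :
  revp N (\sum_i G i) = \sum_i revp N (G i).
Proof.
apply: (big_morph _ (revpD N)); apply/polyP => i.
by rewrite coef_revp !coef0; case: ifP.
Qed.

Lemma revpXn N k : (k <= N)%N -> revp N 'X^k = 'X^(N - k).
Proof.
move=> kN; apply/polyP => i; rewrite coef_revp !coefXn.
case: ifP => iN; first by congr (_%:R); apply/eqP; case: eqP; case: eqP => //; lia.
by rewrite (_ : (i == N - k)%N = false) //; apply/eqP; lia.
Qed.

Lemma poly_expand N (p : {poly R}) : (size p <= N.+1)%N -> p = \sum_(i < N.+1) p`_i *: 'X^i.
Proof.
move=> hp; rewrite -poly_def; apply/polyP => i; rewrite coef_poly.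
by case: ltnP => // Ni; rewrite nth_default // (leq_trans hp Ni).
Qed.

Lemma revpM d e (a b : {poly R}) : (size a <= d.+1)%N -> (size b <= e.+1)%N ->
  revp (d + e) (a * b) = revp d a * revp e b.
Proof.
move=> ha hb; rewrite {1}(poly_expand ha) {1}(poly_expand hb) mulr_suml revp_sum.
rewrite {2}(poly_expand ha) {2}(poly_expand hb) !revp_sum mulr_suml; apply: eq_bigr => i _.
rewrite mulr_sumr revp_sum mulr_sumr; apply: eq_bigr => j _.
have [lei lej] : (i <= d)%N /\ (j <= e)%N by split; rewrite -ltnS.
rewrite -scalerAl -scalerAr scalerA -exprD !revpZ (revpXn (leq_add lei lej)) (revpXn lei).
rewrite (revpXn lej) -scalerAl -scalerAr scalerA -exprD; congr (_ *: 'X^_); lia.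
Qed.

Lemma revpX d (a : {poly R}) n : (size a <= d.+1)%N -> revp d a ^+ n = revp (n * d) (a ^+ n).
Proof.
move=> ha; elim: n => [|n IHn].
  by rewrite expr0 mul0n; apply/polyP => -[|i]; rewrite coef_revp coef1.
rewrite exprS IHn mulSn -revpM ?exprS //.
apply: leq_trans (size_poly_exp_leq _ _) _.
have ha' : ((size a).-1 <= d)%N by case: (size a) ha.
by rewrite ltnS mulnC leq_mul2l ha' orbT.
Qed.

End Reversal.

Section CoefPolyFun.
Variables (R : comNzRingType) (d : nat).
Local Notation V := {ffun 'I_d -> R}.

Definition coef_polyfun (D : nat) (G : V -> {poly R}) : Prop :=
  forall r, polyfun D (fun c => (G c)`_r).

Lemma coef_polyfunW D D' G : (D <= D')%N -> coef_polyfun D G -> coef_polyfun D' G.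
Proof. by move=> leDD' hG r; apply: polyfunW leDD' (hG r). Qed.

Lemma coef_polyfun_cst D (a : {poly R}) : coef_polyfun D (fun _ => a).
Proof. by move=> r; apply: polyfun_cst. Qed.

Lemma coef_polyfunM D1 D2 G1 G2 : coef_polyfun D1 G1 -> coef_polyfun D2 G2 ->
  coef_polyfun (D1 + D2) (fun c => G1 c * G2 c).
Proof.
move=> h1 h2 r.
apply: polyfun_ext (polyfun_sum (fun j : 'I_r.+1 => polyfunM (h1 j) (h2 (r - j)%N))).
by move=> c; rewrite coefM.
Qed.

Lemma coef_polyfunX D G e : coef_polyfun D G -> coef_polyfun (D * e) (fun c => G c ^+ e).
Proof.
move=> hG; elim: e => [|e IHe]; first by rewrite muln0; apply: coef_polyfun_cst.
by rewrite mulnS => r; apply: polyfun_ext (coef_polyfunM hG IHe r) => c; rewrite exprS.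
Qed.

Lemma coef_polyfun_revp D N G : coef_polyfun D G -> coef_polyfun D (fun c => revp N (G c)).
Proof.
move=> hG r; case: (leqP r N) => rN.
  by apply: polyfun_ext (hG (N - r)%N) => c; rewrite coef_revp rN.
by apply: polyfun_ext (polyfun0 _ _ _) => c; rewrite coef_revp leqNgt rN.
Qed.

End CoefPolyFun.

Section FrobeniusPowers.
Variables (F : finFieldType) (d : nat).
Local Notation q := #|F|.

Lemma q_gt1 : (1 < q)%N. Proof. exact: finNzRing_gt1. Qed.

Lemma expr_card_poly (P : {poly F}) : P ^+ q = P \Po 'X^q.
Proof.
elim/poly_ind: P => [|P c IHP]; first by rewrite expr0n gtn_eqF ?comp_poly0 // ltnW // q_gt1.
rewrite exprDn_pchar ?pchar_pnat_card // exprMn IHP -rmorphXn /= expf_card.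
by rewrite comp_polyD comp_polyM comp_polyX comp_polyC.
Qed.

Lemma coef_expr_card (P : {poly F}) r :
  (P ^+ q)`_r = if (q %| r)%N then P`_(r %/ q) else 0.
Proof. by rewrite expr_card_poly coef_comp_poly_Xn // ltnW // q_gt1. Qed.

Lemma coef_polyfun_expr_card D G :
  coef_polyfun D G -> coef_polyfun D (fun c : {ffun 'I_d -> F} => G c ^+ q).
Proof.
move=> hG r; case: (boolP (q %| r)%N) => qr.
  by apply: polyfun_ext (hG (r %/ q)%N) => c; rewrite coef_expr_card qr.
by apply: polyfun_ext (polyfun0 _ _ _) => c; rewrite coef_expr_card (negbTE qr).
Qed.

(* Write M in base q: each digit contributes degree at most q - 1, and raising to the
   power q permutes coefficients without raising their degree. *)
Lemma coef_polyfun_expr P L M : coef_polyfun 1 P -> (M < q ^ L)%N ->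
  coef_polyfun (q.-1 * L) (fun c : {ffun 'I_d -> F} => P c ^+ M).
Proof.
move=> hP; elim: L M => [|L IHL] M ltMq.
  by move: ltMq; rewrite expn0 ltnS leqn0 => /eqP ->; apply: coef_polyfun_cst.
have q_gt0 : (0 < q)%N by apply: ltnW q_gt1.
have lowP : coef_polyfun q.-1 (fun c => P c ^+ (M %% q)).
  by apply: coef_polyfunW (coef_polyfunX (M %% q) hP); rewrite mul1n -ltnS prednK // ltn_pmod.
have highP : coef_polyfun (q.-1 * L) (fun c => (P c ^+ (M %/ q)) ^+ q).
  by apply/coef_polyfun_expr_card/IHL; rewrite ltn_divLR // mulnC -expnS.
rewrite mulnS => r; apply: polyfun_ext (coef_polyfunM lowP highP r) => c.
by rewrite -exprM -exprD addnC -divn_eq.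
Qed.

Lemma coef_polyfun_monic : coef_polyfun 1 (@monic_of F d).
Proof.
move=> r; pose lowc (c : {ffun 'I_d -> F}) := \sum_(j : 'I_d) (j == r :> nat)%:R * c j.
have lowP : polyfun 1 lowc.
  apply: polyfun_sum => j; apply: (@polyfunM _ _ 0 1).
    exact: polyfun_cst.
  exact: polyfun_coord.
apply: polyfun_ext (polyfunD (polyfun_cst _ _ ('X^d`_r)) lowP) => c.
rewrite /monic_of coefD coef_poly /lowc; congr (_ + _); case: ltnP => hr.
  rewrite insubT /= (bigD1 (Ordinal hr)) //= eqxx mul1r big1 ?addr0 // => j.
  by rewrite -(inj_eq val_inj) /= => /negbTE ->; rewrite mul0r.
by rewrite big1 // => j _; rewrite ltn_eqF ?mul0r // (leq_trans (ltn_ord j) hr).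
Qed.

End FrobeniusPowers.

Section TruncatedInverse.
Variable F : finFieldType.

Lemma size_inv_upto (c : nat -> F) k : size (inv_upto c k) = k.+1.
Proof. by elim: k => //= k IHk; rewrite size_rcons IHk. Qed.

Lemma nth_inv_upto (c : nat -> F) k j : (j <= k)%N -> nth 0 (inv_upto c k) j = psinv c j.
Proof.
elim: k => [|k IHk]; first by rewrite leqn0 => /eqP ->.
rewrite leq_eqVlt => /orP [/eqP -> //|ltjk].
by rewrite /= nth_rcons size_inv_upto ltjk IHk.
Qed.

Lemma psinvS (c : nat -> F) k :
  psinv c k.+1 = - (c 0%N)^-1 * \sum_(i < k.+1) c i.+1 * psinv c (k - i).
Proof.
rewrite /psinv /= nth_rcons size_inv_upto ltnn eqxx.
by congr (_ * _); apply: eq_bigr => i _; rewrite nth_inv_upto // leq_subr.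
Qed.

Lemma psinv_unique (c Y : nat -> F) K : c 0%N = 1 ->
  (forall r, (r < K)%N -> \sum_(i < r.+1) c i * Y (r - i)%N = (r == 0%N)%:R) ->
  forall r, (r < K)%N -> psinv c r = Y r.
Proof.
move=> c0 cY; elim/ltn_ind => -[|k] IHk ltkK.
  by have := cY 0%N ltkK; rewrite big_ord1 c0 mul1r subn0 /= => ->; rewrite /psinv /= c0 invr1.
rewrite psinvS c0 invr1 mulN1r.
have /eqP := cY k.+1 ltkK; rewrite big_ord_recl /= c0 mul1r subn0 addr_eq0 => /eqP ->.
congr (- _); apply: eq_bigr => i _; rewrite /bump /= add1n subSS IHk //.
  by rewrite ltnS leq_subr.
by apply: leq_ltn_trans (leq_subr _ _) (ltnW ltkK).
Qed.

End TruncatedInverse.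

Section InversePowers.
Variable F : finFieldType.
Local Notation q := #|F|.

Lemma size_monic_of d (c : {ffun 'I_d -> F}) : size (monic_of c) = d.+1.
Proof. by rewrite /monic_of size_polyDl ?size_polyXn // ltnS size_poly. Qed.

Lemma coef_monic_of_deg d (c : {ffun 'I_d -> F}) : (monic_of c)`_d = 1.
Proof. by rewrite /monic_of coefD coefXn eqxx coef_poly ltnn addr0. Qed.

Definition rev_monic d (c : {ffun 'I_d -> F}) : {poly F} := revp d (monic_of c).

Lemma coef0_rev_monic d (c : {ffun 'I_d -> F}) : (rev_monic c)`_0 = 1.
Proof. by rewrite coef_revp leq0n subn0 coef_monic_of_deg. Qed.

Lemma coef_polyfun_rev_monic d : coef_polyfun 1 (@rev_monic d).
Proof. exact: coef_polyfun_revp (coef_polyfun_monic F d). Qed.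

Lemma coef_expr_card_expn (P : {poly F}) L r : P`_0 = 1 -> (r < q ^ L)%N ->
  (P ^+ (q ^ L))`_r = (r == 0%N)%:R.
Proof.
move=> P0; have q_gt0 : (0 < q)%N by apply: ltnW (q_gt1 F).
elim: L r => [|L IHL] r ltrq.
  by move: ltrq; rewrite expn0 ltnS leqn0 => /eqP ->; rewrite expr1 P0.
rewrite expnSr exprM coef_expr_card; case: ifP => qr.
  rewrite IHL; last by rewrite ltn_divLR // -expnSr.
  case: (posnP r) => [->|r_gt0]; first by rewrite div0n.
  by rewrite !gtn_eqF // divn_gt0 // dvdn_leq.
by case: (posnP r) qr => [->|r_gt0]; rewrite ?dvdn0 // gtn_eqF.
Qed.

(* a^-n = u^(n d) rev(a)^-n, and rev(a)^(q^L) = 1 mod u^(q^L) *)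
Lemma inv_powE d (c : {ffun 'I_d -> F}) n k L : (n <= q ^ L)%N -> (n * d <= k)%N ->
  (k - n * d < q ^ L)%N ->
  inv_pow d (monic_of c) n k = (rev_monic c ^+ (q ^ L - n))`_(k - n * d).
Proof.
move=> nqL ndk ltkq; rewrite /inv_pow ndk.
have powE i : (if (i <= n * d)%N then (monic_of c ^+ n)`_(n * d - i) else 0)
    = (rev_monic c ^+ n)`_i.
  by rewrite /rev_monic revpX ?size_monic_of // coef_revp.
apply: (psinv_unique (K := (q ^ L)%N)) => //.
  by rewrite (powE 0%N) -horner_coef0 horner_exp horner_coef0 coef0_rev_monic expr1n.
move=> r ltrq; under eq_bigr do rewrite powE.
by rewrite -coefM -exprD subnKC // coef_expr_card_expn // coef0_rev_monic.
Qed.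

End InversePowers.

Lemma sum_neq0_exists (V : nmodType) (I : finType) (P : pred I) (G : I -> V) :
  \sum_(i | P i) G i != 0 -> exists2 i, P i & G i != 0.
Proof.
move=> sum_neq0; have /existsP [i /andP [Pi Gi]] : [exists i, P i && (G i != 0)].
  apply: contraNT sum_neq0; rewrite negb_exists => /forallP G0.
  by rewrite big1 // => i Pi; apply/eqP; have := G0 i; rewrite Pi negbK.
by exists i.
Qed.

Section PowerSumBounds.
Variables (F : finFieldType) (s : nat).
Local Notation q := #|F|.

Definition weight (p : nat * mindex s) : nat := (\sum_i p.2 i)%N.

Lemma Sd_eq0 d (p : nat * mindex s) m k L : (1 <= p.1)%N -> (p.1 <= q ^ L)%N ->
  (k - p.1 * d < q ^ L)%N -> (weight p + q.-1 * L < d * q.-1)%N -> Sd F d p m k = 0.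
Proof.
move=> p1_gt0 p1_le ltkq ltw; have [ltk|lek] := ltnP k (p.1 * d).
  by apply: big1 => c _; rewrite /inv_pow leqNgt ltk mulr0.
rewrite /Sd; under eq_bigr do rewrite (inv_powE _ p1_le lek ltkq).
apply: (sum_polyfun_eq0 (D := (weight p + q.-1 * L)%N)) => //; apply: polyfunM.
  apply: polyfun_prod => i; have := coef_polyfunX (p.2 i) (coef_polyfun_monic F d).
  by rewrite mul1n => /(_ (m i)).
apply: coef_polyfun_expr (coef_polyfun_rev_monic F d) _ _.
by rewrite -subn_gt0 subKn // (leq_trans p1_gt0).
Qed.

Lemma Sd_neq0_udeg d (p : nat * mindex s) m k : Sd F d p m k != 0 -> (p.1 * d <= k)%N.
Proof.
apply: contraR; rewrite -ltnNge => ltk; apply/eqP.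
by apply: big1 => c _; rewrite /inv_pow leqNgt ltk mulr0.
Qed.

Lemma Sd_neq0_tdeg d (p : nat * mindex s) m k : Sd F d p m k != 0 -> (mdeg m <= d * weight p)%N.
Proof.
move=> /sum_neq0_exists [c _]; rewrite mulf_eq0 negb_or => /andP [/prodf_neq0 coef_neq0 _].
rewrite /mdeg /weight big_distrr /=; apply: leq_sum => i _.
apply: contraR (coef_neq0 i isT); rewrite -ltnNge => ltm.
rewrite nth_default //; apply: leq_trans (size_poly_exp_leq _ _) _.
by rewrite size_monic_of.
Qed.

Lemma ser_mul_neq0 (f g : ser F s) m k : ser_mul f g m k != 0 ->
  exists (j : mindex s) (l : nat), [/\ (l <= k)%N, (forall i, j i <= m i)%N,
    f j l != 0 & g (fun i => m i - j i)%N (k - l)%N != 0].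
Proof.
move=> /sum_neq0_exists [j /forallP lejm] /sum_neq0_exists [l _].
rewrite mulf_eq0 negb_or => /andP [fjl gjl].
by exists (fun i => nat_of_ord (j i)), l; split; rewrite // -ltnS ltn_ord.
Qed.

Lemma mdeg_split (j m : mindex s) : (forall i, j i <= m i)%N ->
  mdeg m = (mdeg j + mdeg (fun i => m i - j i))%N.
Proof. by move=> lejm; rewrite /mdeg -big_split; apply: eq_bigr => i _ /=; rewrite subnKC. Qed.

Definition weights (l : seq (nat * mindex s)) : nat := (\sum_(x <- l) weight x)%N.

Lemma Sm_neq0_head (p : nat * mindex s) ps d m k : Sm F p ps d m k != 0 ->
  exists (j : mindex s) l, (l <= k)%N /\ Sd F d p j l != 0.
Proof.
case: ps => [|p' ps] /=; first by exists m, k.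
by move=> /ser_mul_neq0 [j [l [lelk _ Sd_neq0 _]]]; exists j, l.
Qed.

Lemma Sm_neq0_tdeg ps (p : nat * mindex s) d m k :
  Sm F p ps d m k != 0 -> (mdeg m <= d * weights (p :: ps))%N.
Proof.
elim: ps p d m k => [|p' ps IHps] p d m k.
  by move=> /Sd_neq0_tdeg; rewrite /weights big_seq1.
move=> /ser_mul_neq0 [j [l [_ lejm /Sd_neq0_tdeg Sd_tdeg]]].
move=> /sum_neq0_exists [i _ /IHps Sm_tdeg].
rewrite (mdeg_split lejm) /weights big_cons mulnDr leq_add //.
by apply: leq_trans Sm_tdeg _; rewrite leq_mul2r ltnW ?orbT.
Qed.

Lemma Sm_neq0_udeg (p : nat * mindex s) ps d m k : (1 <= p.1)%N ->
  Sm F p ps d m k != 0 -> (d <= k)%N.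
Proof.
move=> p1_gt0 /Sm_neq0_head [j [l [lelk /Sd_neq0_udeg ledl]]].
by apply: leq_trans lelk; apply: leq_trans ledl; rewrite leq_pmull.
Qed.

(* Sd_eq0 with L = d - weight p - 1 kills every coefficient of u^k with k < 2^L. *)
Lemma Sm_neq0_exp_udeg (p : nat * mindex s) ps d m k : (1 <= p.1)%N ->
  (weight p + p.1 < d)%N -> Sm F p ps d m k != 0 -> (2 ^ (d - weight p - 1) <= k)%N.
Proof.
move=> p1_gt0 ltd /Sm_neq0_head [j [l [lelk Sd_neq0]]]; apply: leq_trans lelk.
rewrite leqNgt; apply: contra Sd_neq0 => ltl; apply/eqP.
set L := (d - weight p - 1)%N.
have le2q : (2 ^ L <= q ^ L)%N by case: L => // L; rewrite leq_exp2r // q_gt1.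
have q1_gt0 : (1 <= q.-1)%N by rewrite -ltnS prednK ?q_gt1 // ltnW ?q_gt1.
apply: (@Sd_eq0 d p j l L) => //.
- apply: leq_trans le2q; apply: ltnW; apply: leq_trans (ltn_expl _ (isT : (1 < 2)%N)) _.
  by rewrite leq_exp2l // /L; lia.
- by apply: leq_ltn_trans (leq_subr _ _) (leq_trans ltl le2q).
- have dE : d = (L + weight p + 1)%N by rewrite /L; lia.
  by move: (q.-1) q1_gt0; rewrite dE => Q; nia.
Qed.

End PowerSumBounds.

Lemma linear_le_exp2 a b c : exists i0, forall i, (i0 <= i)%N -> (a * i + b <= 2 ^ (i - c))%N.
Proof.
pose K := (2 * a + a * c + b + 1)%N; exists (c + 2 * K)%N => i lei.
have [j [-> leKj]] : exists j, i = (j + K + c)%N /\ (K <= j)%N by exists (i - c - K)%N; lia.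
rewrite addnK expnD; have := ltn_expl j (isT : (1 < 2)%N); have := ltn_expl K (isT : (1 < 2)%N).
have KE : K = (2 * a + a * c + b + 1)%N by [].
move: (2 ^ j)%N (2 ^ K)%N => x y; clearbody K; nia.
Qed.

Lemma entire_in_Tate (F : finFieldType) s (z : ser F s) : entire z -> in_Tate z.
Proof. by move=> z_entire B; have [M zM] := z_entire 0%N B; exists M => m /zM. Qed.

Section ZetaValue.
Variables (F : finFieldType) (s : nat) (p : nat * mindex s) (ps : seq (nat * mindex s)).
Hypothesis p1_gt0 : (1 <= p.1)%N.

(* only the S_d with d <= k contribute to the coefficient of u^k *)
Definition zeta_coef : ser F s := fun m k => ser_sum k.+1 (Sm F p ps) m k.

Lemma ser_sum_Sm_stable D m k : (k < D)%N -> ser_sum D (Sm F p ps) m k = zeta_coef m k.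
Proof.
move=> ltkD; rewrite /zeta_coef /ser_sum (big_ord_widen D (fun i => Sm F p ps i m k) ltkD).
rewrite [LHS](bigID (fun i : 'I_D => (i < k.+1)%N)) /= [X in _ + X]big1 ?addr0 // => i.
by rewrite ltnS; apply: contraNeq => /(Sm_neq0_udeg p1_gt0).
Qed.

Lemma zeta_coef_is_zeta : is_zeta p ps zeta_coef.
Proof. by move=> B; exists B => D leBD m k ltkB; rewrite ser_sum_Sm_stable // (leq_trans ltkB). Qed.

Lemma entire_zeta_coef : entire zeta_coef.
Proof.
move=> N B; set W := weights (p :: ps); set w := weight p.
have [i0 lin_le] := linear_le_exp2 (N * W) B (w + 1).
exists ((i0 + w + p.1 + 1) * W + 1)%N => m lem k ltk; apply/eqP; move: ltk; apply: contraTT.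
move=> /sum_neq0_exists [d _ Sm_neq0]; rewrite -leqNgt.
have mW := Sm_neq0_tdeg Sm_neq0.
have ltd : (i0 + w + p.1 + 1 < d)%N by nia.
apply: leq_trans (Sm_neq0_exp_udeg p1_gt0 _ Sm_neq0); last by lia.
rewrite -subnDA; apply: leq_trans (lin_le d _); last by lia.
by rewrite leq_add2r -mulnA leq_mul2l [(W * d)%N]mulnC mW orbT.
Qed.

End ZetaValue.

Theorem proposition1 (F : finFieldType) (s : nat) (hs : (1 <= s)%N)
  (p : nat * mindex s) (ps : seq (nat * mindex s))
  (hn : all (fun x => (1 <= x.1)%N) (p :: ps)) :
  exists z : ser F s, is_zeta p ps z /\ in_Tate z /\ entire z.
Proof.
have /andP [p1_gt0 _] := hn.
exists (zeta_coef F p ps); split; first exact: zeta_coef_is_zeta.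
by split; [apply: entire_in_Tate|]; apply: entire_zeta_coef.
Qed.
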